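(* For all integers $k\ge 1$ and $\Delta\ge 3$, there exists a connected graph $G_{k,\Delta}$ with maximum degree $\Delta$ satisfying $\gamma_c(G_{k,\Delta})=k$ and $F_c(G_{k,\Delta})=\gamma_c(G_{k,\Delta})(\Delta-2)+2$.
   Context: Forcing process: given a set of initially colored vertices, at each step a colored vertex with exactly one non-colored neighbor forces (colors) that neighbor. A set $S\subseteq V(G)$ is a forcing set if iterating this process from $S$ eventually colors all vertices; it is a connected forcing set if moreover the induced subgraph $G[S]$ is connected. $F_c(G)$ is the minimum cardinality of a connected forcing set of $G$. A connected dominating set is a set $D\subseteq V(G)$ such that every vertex outside $D$ has a neighbor in $D$ and $G[D]$ is connected; $\gamma_c(G)$ is the minimum cardinality of a connected dominating set. *)

From mathcomp Require Import all_boot.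
Set Implicit Arguments. Unset Strict Implicit. Unset Printing Implicit Defensive.

Section Graphs.
Variable T : finType.
Variable e : rel T.

Definition simple_graph : Prop := symmetric e /\ irreflexive e.

Definition nbhd (v : T) : {set T} := [set u | e v u].
Definition deg (v : T) : nat := #|nbhd v|.
Definition max_degree : nat := \max_(v : T) deg v.

Definition induced_connected (S : {set T}) : Prop :=
  S != set0 /\
  forall x y, x \in S -> y \in S ->
    connect [rel a b | [&& e a b, a \in S & b \in S]] x y.

Definition graph_connected : Prop := induced_connected [set: T].

Definition dominating (D : {set T}) : Prop :=
  forall v, v \notin D -> exists2 u, u \in D & e v u.
Definition connected_dominating (D : {set T}) : Prop :=
  dominating D /\ induced_connected D.

(* One step applies all currently
   available forces (simultaneous application yields the same final
   coloured set as sequential application). *)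
Definition forces (S : {set T}) (v u : T) : bool :=
  [&& v \in S, e v u, u \notin S &
      [forall w, (e v w && (w \notin S)) ==> (w == u)]].
Definition force_step (S : {set T}) : {set T} :=
  S :|: [set u | [exists v, forces S v u]].
(* after #|T| steps the process has stabilised *)
Definition force_closure (S : {set T}) : {set T} := iter #|T| force_step S.
Definition forcing_set (S : {set T}) : Prop := force_closure S = [set: T].
Definition connected_forcing (S : {set T}) : Prop :=
  forcing_set S /\ induced_connected S.

Definition min_card (P : {set T} -> Prop) (m : nat) : Prop :=
  (exists2 S, P S & #|S| = m) /\ (forall S, P S -> m <= #|S|).

Definition conn_domination_number_is (m : nat) : Prop :=
  min_card connected_dominating m.
Definition conn_forcing_number_is (m : nat) : Prop :=
  min_card connected_forcing m.

End Graphs.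

From mathcomp Require Import all_boot zify.
Set Implicit Arguments. Unset Strict Implicit. Unset Printing Implicit Defensive.

(* The graph is a caterpillar: a path on k spine vertices, each carrying
   Delta - 2 pendant leaves, plus one extra leaf at each end of the path.
   A support vertex (the neighbour of a leaf) lies in every connected
   dominating set, so the spine is the unique minimum one.
   A connected set other than a single leaf contains the support of each of
   its leaves, and this survives every forcing step; hence only spine vertices
   ever force.  A vertex that has forced has its whole closed neighbourhood
   coloured, so it never forces again: at most k vertices get coloured by the
   process, and a connected forcing set has at least |V| - k = k(Delta-2) + 2
   vertices.  Removing one leaf at each spine vertex attains this bound. *)


Section GraphFacts.
Variables (T : finType) (e : rel T).

Lemma connect_neq_step (r : rel T) x y :
  connect r x y -> x != y -> exists z, r x z.
Proof.
case/connectP=> [[|z p]] /=; first by move=> _ ->; rewrite eqxx.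
by case/andP=> rxz _ _ _; exists z.
Qed.

Lemma pendant_support_in (S : {set T}) v w :
  induced_connected e S -> nbhd e w = [set v] -> w \in S -> S != [set w] ->
  v \in S.
Proof.
case=> _ connS nbhd_w wS S_neq.
have [u uS u_neq_w] : exists2 u, u \in S & u \notin [set w].
  apply/subsetPn; rewrite subset1 negb_or S_neq /=.
  by apply/set0Pn; exists w.
have w_neq_u : w != u by rewrite eq_sym -in_set1.
have [z /and3P [wz _ zS]] := connect_neq_step (connS _ _ wS uS) w_neq_u.
have : z \in nbhd e w by rewrite inE.
by rewrite nbhd_w inE => /eqP <-.
Qed.

Lemma support_in_connected_dominating (D : {set T}) v w :
  symmetric e -> 2 < #|T| -> connected_dominating e D -> nbhd e w = [set v] ->
  v \in D.
Proof.
move=> e_sym T_big [domD connD] nbhd_w; have e_w u : e w u = (u == v).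
  by rewrite -in_set1 -nbhd_w inE.
apply/negPn/negP => vD.
have wD : w \in D.
  by apply/negPn/negP => /domD [u uD]; rewrite e_w => /eqP u_v; rewrite -u_v uD in vD.
have D_neq : D != [set w].
  apply/eqP => D_w.
  have [x] : exists x, x \in ~: [set v; w].
    apply/card_gt0P; have := cardsC [set v; w].
    have : #|[set v; w]| <= 2 by rewrite cards2; case: (_ != _).
    lia.
  rewrite !inE negb_or => /andP [x_neq_v x_neq_w].
  have [u] : exists2 u, u \in D & e x u by apply: domD; rewrite D_w inE.
  by rewrite D_w inE => /eqP ->; rewrite e_sym e_w (negbTE x_neq_v).
by rewrite (pendant_support_in connD nbhd_w wD D_neq) in vD.
Qed.

Lemma subset_force_step (C : {set T}) : C \subset force_step e C.
Proof. exact: subsetUl. Qed.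

Lemma iter_force_step_setT t : iter t (force_step e) setT = setT.
Proof. by elim: t => //= t ->; rewrite /force_step setTU. Qed.

Lemma forcing_set_force_step S : force_step e S = setT -> forcing_set e S.
Proof.
rewrite /forcing_set /force_closure; case T_card: #|T| => [|t] S_step.
  by apply/setP => x; have := card0_eq T_card x.
by rewrite iterSr S_step iter_force_step_setT.
Qed.

Lemma force_step_pendant v w : irreflexive e -> nbhd e w = [set v] ->
  force_step e [set w] = [set w; v].
Proof.
move=> e_irr nbhd_w; have e_w u : e w u = (u == v).
  by rewrite -in_set1 -nbhd_w inE.
have v_neq_w : v != w by apply/eqP => v_w; have := e_irr w; rewrite e_w v_w eqxx.
apply/setP => x; rewrite /force_step !inE; case: (eqVneq x w) => //= x_neq_w.
apply/existsP/eqP => [[u /and4P [] ] | ->].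
  by rewrite inE => /eqP ->; rewrite e_w => /eqP.
exists w; rewrite /forces !inE eqxx e_w eqxx v_neq_w /=.
by apply/forallP => y; rewrite e_w; apply/implyP => /andP [].
Qed.

Section ForcerCount.
Variables (P : {set T}) (I : {set T} -> Prop).
Hypothesis I_step : forall C, I C -> I (force_step e C).
Hypothesis I_forcer : forall C v u, I C -> forces e C v u -> v \in P.

Definition unsaturated (C : {set T}) : {set T} :=
  [set v in P | ~~ (v |: nbhd e v \subset C)].

Definition uncoloured_nbr (C : {set T}) v : T :=
  odflt v [pick u | e v u && (u \notin C)].

(* A forcer leaves [unsaturated] in that step, and [uncoloured_nbr] recovers
   the vertex it forced. *)
Lemma forced_sub_uncoloured_nbr C : I C ->
  force_step e C :\: C \subset
    uncoloured_nbr C @: (unsaturated C :\: unsaturated (force_step e C)).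
Proof.
move=> IC; apply/subsetP => u; rewrite !inE => /andP [uC]; rewrite (negbTE uC) /=.
case/existsP => v force_vu; have vP := I_forcer IC force_vu.
case/and4P: force_vu => vC vu _ /forallP only_u.
have only_u' w : e v w -> w \notin C -> w = u.
  by move=> vw wC; apply/eqP; have := only_u w; rewrite vw wC.
have uC' : u \in force_step e C.
  rewrite !inE; apply/orP; right; apply/existsP; exists v.
  by rewrite /forces vC vu uC; apply/forallP.
apply/imsetP; exists v; last first.
  rewrite /uncoloured_nbr; case: pickP => [w /andP [vw wC] | no_w].
    exact/esym/only_u'.
  by have := no_w u; rewrite vu uC.
rewrite !inE vP /= negbK; apply/andP; split.
  have C_sub := subsetP (subset_force_step C).
  apply/subsetP => w /setU1P [-> | ]; first exact: C_sub.
  rewrite inE => vw; have [wC | wC] := boolP (w \in C); first exact: C_sub.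
  by rewrite (only_u' w vw wC).
by apply/subsetPn; exists u => //; rewrite !inE vu orbT.
Qed.

Lemma card_force_step C : I C ->
  #|~: C| + #|unsaturated (force_step e C)| <=
  #|~: force_step e C| + #|unsaturated C|.
Proof.
move=> IC; set C' := force_step e C.
have sub_C : C \subset C' := subset_force_step C.
have sub_unsat : unsaturated C' \subset unsaturated C.
  apply/subsetP => v; rewrite !inE => /andP [-> /=]; apply: contra.
  by move/subset_trans; apply.
have := leq_trans (subset_leq_card (forced_sub_uncoloured_nbr IC))
  (leq_imset_card _ _).
rewrite !cardsDS // -/C' => card_new.
have := cardsC C; have := cardsC C'.
have := subset_leq_card sub_C; have := subset_leq_card sub_unsat.
lia.
Qed.

Lemma card_iter_force_step t C : I C ->
  #|~: C| + #|unsaturated (iter t (force_step e) C)| <=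
  #|~: iter t (force_step e) C| + #|unsaturated C|.
Proof.
elim: t C => [|t IH] C IC /=; first by rewrite addnC.
have := IH _ (I_step IC); rewrite -!iterSr !iterS.
have := card_force_step IC; lia.
Qed.

Lemma card_uncoloured_le_forcers t S : I S ->
  iter t (force_step e) S = setT -> #|~: S| <= #|P|.
Proof.
move=> IS S_forcing; have := card_iter_force_step t IS; rewrite S_forcing.
have -> : unsaturated setT = set0.
  by apply/setP => v; rewrite !inE subsetT andbF.
rewrite setCT !cards0 addn0 add0n => /leq_trans; apply.
by apply/subset_leq_card/subsetP => v /setIdP [].
Qed.

End ForcerCount.

End GraphFacts.

Lemma card_sum_set (A B : finType) (S : {set A + B}) :
  #|S| = #|[set a | inl a \in S]| + #|[set b | inr b \in S]|.
Proof. by rewrite -sum1_card big_sumType !sum1dep_card. Qed.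

Lemma card_ord_val n a : #|[set j : 'I_n | val j == a]| = (a < n).
Proof.
case: ltnP => [a_lt | a_ge].
  rewrite (_ : [set j | _] = [set Ordinal a_lt]) ?cards1 //.
  by apply/setP => j; rewrite !inE -val_eqE.
apply/eqP; rewrite cards_eq0; apply/eqP/setP => j; rewrite !inE.
by apply/negbTE; rewrite neq_ltn (leq_trans (ltn_ord j)).
Qed.

Section Caterpillar.
Variables m d : nat.
Local Notation n := m.+1.

(* A path on the spine vertices ['I_n]; every spine vertex carries [d.+1]
   pendant leaves, and each end of the path carries one more (the [bool]
   leaves), so that every spine vertex has degree [d.+3]. *)
Definition leaf := (('I_n * 'I_d.+1) + bool)%type.
Definition vertex := ('I_n + leaf)%type.

Definition support (l : leaf) : 'I_n :=
  match l with inl p => p.1 | inr false => ord0 | inr true => ord_max end.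

Definition path_adj (i j : 'I_n) : bool := (i.+1 == j :> nat) || (j.+1 == i :> nat).

Definition cat_adj (x y : vertex) : bool :=
  match x, y with
  | inl i, inl j => path_adj i j
  | inl i, inr l | inr l, inl i => support l == i
  | inr _, inr _ => false
  end.

Lemma cat_adj_sym : symmetric cat_adj.
Proof. by case=> [i|l] [j|l'] //=; rewrite /path_adj orbC. Qed.

Lemma cat_adj_irr : irreflexive cat_adj.
Proof. by case=> [i|l] //=; rewrite /path_adj; apply/negP; case/orP=> /eqP; lia. Qed.

Lemma nbhd_leaf l : nbhd cat_adj (inr l) = [set inl (support l)].
Proof. by apply/setP => [[i|l']]; rewrite !inE //= eq_sym. Qed.

Lemma card_path_adj i : #|[set j | path_adj i j]| = (0 < i) + (i < m).
Proof.
have -> : [set j | path_adj i j] =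
    [set j : 'I_n | val j == i.+1] :|: [set j | (val j).+1 == i].
  by apply/setP => j; rewrite !inE /path_adj eq_sym.
rewrite cardsU card_ord_val ltnS.
have -> : [set j : 'I_n | val j == i.+1] :&: [set j | (val j).+1 == i] = set0.
  apply/setP => j; rewrite !inE; apply/negP => /andP [/eqP j1 /eqP j2].
  by rewrite j1 in j2; lia.
case: i => [[|i] lt_i] /=.
  have -> : [set j : 'I_n | (val j).+1 == 0] = set0 by apply/setP => j; rewrite !inE.
  by rewrite !cards0 addn0 subn0.
have -> : [set j : 'I_n | (val j).+1 == i.+1] = [set j | val j == i].
  by apply/setP => j; rewrite !inE eqSS.
by rewrite card_ord_val cards0 (ltnW lt_i) subn0 addnC.
Qed.

Lemma deg_spine i : deg cat_adj (inl i) = d.+3.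
Proof.
rewrite /deg card_sum_set.
have -> : [set j | inl j \in nbhd cat_adj (inl i)] = [set j | path_adj i j].
  by apply/setP => j; rewrite !inE.
rewrite card_path_adj card_sum_set.
have -> : [set p | inl p \in [set l | inr l \in nbhd cat_adj (inl i)]] =
    setX [set i] [set: 'I_d.+1].
  by apply/setP => [[a b]]; rewrite !inE /= andbT.
rewrite cardsX cards1 cardsT card_ord mul1n.
rewrite -sum1dep_card big_mkcond big_bool /= !inE /= -!val_eqE /=.
by have := ltn_ord i; case: eqP; case: eqP; lia.
Qed.

Lemma max_degree_cat : max_degree cat_adj = d.+3.
Proof.
apply/eqP; rewrite eqn_leq; apply/andP; split.
  apply/bigmax_leqP => [[i|l]] _; first by rewrite deg_spine.
  by rewrite /deg nbhd_leaf cards1.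
by rewrite -(deg_spine ord0) (leq_bigmax (inl ord0)).
Qed.

Definition spine : {set vertex} := [set inl i | i in 'I_n].

Lemma card_spine : #|spine| = n.
Proof. by rewrite card_imset ?card_ord //; move=> i j []. Qed.

Lemma card_vertex : #|{: vertex}| = n + (n * d.+1 + 2).
Proof. by rewrite !card_sum card_prod !card_ord card_bool. Qed.

Lemma induced_connected_spine_sub (S : {set vertex}) : spine \subset S -> induced_connected cat_adj S.
Proof.
move=> spine_S; have iS i : inl i \in S by apply: (subsetP spine_S); apply: imset_f.
set r := [rel a b | [&& cat_adj a b, a \in S & b \in S]].
have r_sym : symmetric r.
  by move=> a b /=; rewrite cat_adj_sym [(a \in S) && _]andbC.
have conn_spine i : connect r (inl ord0) (inl i).
  case: i => j; elim: j => [|j IH] lt_j; first by rewrite (_ : Ordinal lt_j = ord0) //; apply: val_inj.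
  apply: connect_trans (IH (ltnW lt_j)) (connect1 _).
  by rewrite /= !iS /path_adj /= eqxx.
have conn_all x : x \in S -> connect r (inl ord0) x.
  case: x => [i|l] xS; first exact: conn_spine.
  apply: connect_trans (conn_spine (support l)) (connect1 _).
  by rewrite /= iS xS eqxx.
split; first by apply/set0Pn; exists (inl ord0).
move=> x y xS yS; apply: connect_trans (conn_all y yS).
by rewrite (sym_connect_sym r_sym); apply: conn_all.
Qed.

Lemma spine_connected_dominating : connected_dominating cat_adj spine.
Proof.
split; last exact: induced_connected_spine_sub.
case=> [i | l] x_spine; first by rewrite imset_f in x_spine.
by exists (inl (support l)); rewrite ?imset_f //= eqxx.
Qed.

Lemma spine_sub_connected_dominating D :
  connected_dominating cat_adj D -> spine \subset D.
Proof.
move=> cdsD; apply/subsetP => _ /imsetP [i _ ->].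
apply: (support_in_connected_dominating cat_adj_sym _ cdsD (nbhd_leaf (inl (i, ord0)))).
by rewrite card_vertex; lia.
Qed.

Lemma conn_domination_number_cat : conn_domination_number_is cat_adj n.
Proof.
split; first by exists spine; [exact: spine_connected_dominating | exact: card_spine].
by move=> D /spine_sub_connected_dominating/subset_leq_card; rewrite card_spine.
Qed.

Definition parent_closed (C : {set vertex}) : Prop :=
  forall l, inr l \in C -> inl (support l) \in C.

Lemma forcer_in_spine C v u :
  parent_closed C -> forces cat_adj C v u -> v \in spine.
Proof.
move=> closedC; case: v => [i _ | l]; first exact: imset_f.
case/and4P => lC; case: u => [j | l'] //= /eqP <- jC _.
by rewrite closedC in jC.
Qed.

Lemma parent_closed_force_step C :
  parent_closed C -> parent_closed (force_step cat_adj C).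
Proof.
move=> closedC l; rewrite /force_step !inE.
case/orP => [lC | /existsP [v /and4P [vC vl _ _]]]; first by rewrite closedC.
by case: v vC vl => [i | l'] //= iC /eqP ->; rewrite iC.
Qed.

Lemma parent_closed_forcing_card t S : parent_closed S ->
  iter t (force_step cat_adj) S = setT -> n * d.+1 + 2 <= #|S|.
Proof.
move=> closedS S_forcing.
have := card_uncoloured_le_forcers parent_closed_force_step forcer_in_spine
  closedS S_forcing.
by rewrite card_spine; have := cardsC S; rewrite card_vertex; lia.
Qed.

Lemma connected_parent_closed S : induced_connected cat_adj S ->
  parent_closed S \/ exists l, S = [set inr l].
Proof.
move=> connS; case: (boolP [exists l, S == [set inr l]]) => [|single].
  by case/existsP => l /eqP ->; right; exists l.
left => l lS; apply: pendant_support_in connS (nbhd_leaf l) lS _.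
by apply: contraNneq single => ->; apply/existsP; exists l.
Qed.

Lemma connected_forcing_card S :
  connected_forcing cat_adj S -> n * d.+1 + 2 <= #|S|.
Proof.
case=> S_forcing connS; case: (connected_parent_closed connS) => [closedS | [l S_l]].
  exact: parent_closed_forcing_card S_forcing.
move: S_forcing; rewrite /forcing_set /force_closure card_vertex addnS iterSr S_l.
rewrite (force_step_pendant cat_adj_irr (nbhd_leaf l)).
have closed : parent_closed [set inr l; inl (support l)].
  by move=> l'; rewrite !inE => /orP [/eqP [->] | //]; rewrite eqxx orbT.
move=> /(parent_closed_forcing_card closed); rewrite cards2.
by case: (_ != _); lia.
Qed.

Definition first_leaves : {set vertex} := [set inr (inl (i, ord0)) | i in 'I_n].

Lemma force_step_compl_first_leaves : force_step cat_adj (~: first_leaves) = setT.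
Proof.
apply/setP => x; rewrite /force_step !inE; case x_first: (x \in first_leaves) => //=.
case/imsetP: x_first => i _ ->; apply/existsP; exists (inl i).
rewrite /forces !inE /= eqxx imset_f //=.
have -> : (inl i : vertex) \in first_leaves = false by apply/negbTE/negP => /imsetP [j _].
apply/forallP => w; apply/implyP; rewrite !inE negbK.
case: w => [j | [[j b] | b]] //=; first by move=> /andP [_ /imsetP [? _]].
  by case/andP => /eqP -> /imsetP [j' _ [-> ->]].
by move=> /andP [_ /imsetP [? _]].
Qed.

Lemma connected_forcing_compl_first_leaves : connected_forcing cat_adj (~: first_leaves).
Proof.
split; first exact/forcing_set_force_step/force_step_compl_first_leaves.
apply: induced_connected_spine_sub; apply/subsetP => _ /imsetP [i _ ->].
by rewrite inE; apply/imsetP => [[j _]].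
Qed.

Lemma card_compl_first_leaves : #|~: first_leaves| = n * d.+1 + 2.
Proof.
rewrite cardsCs setCK card_vertex card_imset ?card_ord; first lia.
by move=> i j [->].
Qed.

Lemma conn_forcing_number_cat : conn_forcing_number_is cat_adj (n * d.+1 + 2).
Proof.
split; last exact: connected_forcing_card.
exists (~: first_leaves); first exact: connected_forcing_compl_first_leaves.
exact: card_compl_first_leaves.
Qed.

End Caterpillar.

Theorem proposition4 (k D : nat) (hk : 1 <= k) (hD : 3 <= D) :
  exists (T : finType) (e : rel T),
    [/\ simple_graph e, graph_connected e, max_degree e = D,
        conn_domination_number_is e k &
        conn_forcing_number_is e (k * (D - 2) + 2)].
Proof.
case: k hk => [// | m] _; case: D hD => [| [| [| d]]] // _.
exists (vertex m d), (@cat_adj m d); split.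
- by split; [exact: cat_adj_sym | exact: cat_adj_irr].
- exact/induced_connected_spine_sub/subsetT.
- exact: max_degree_cat.
- exact: conn_domination_number_cat.
- exact: conn_forcing_number_cat.
Qed.
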